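(* Let $\mathrm{Alt}[x,y,z]$ be the free alternative algebra over a field on three free generators $x,y,z$. Then its Veronese $2$-subalgebra $V^{(2)}(\mathrm{Alt}[x,y,z])$ is not free in the variety $\mathrm{Alt}_3$.
   Context: An algebra is alternative if it satisfies $(x,x,y)=(y,x,x)=0$, where $(a,b,c)=(ab)c-a(bc)$. $\mathrm{Alt}_3$ is the subvariety of the variety of alternative algebras generated by the free alternative algebra of rank $3$. The Veronese $2$-subalgebra $V^{(2)}(\mathrm{Alt}[x,y,z])$ is the span of all monomials in $x,y,z$ of even length. An algebra is free in $\mathrm{Alt}_3$ if it is isomorphic to a free algebra of the variety $\mathrm{Alt}_3$ on some set of generators. *)

From mathcomp Require Import all_boot all_order all_algebra.
Set Implicit Arguments. Unset Strict Implicit. Unset Printing Implicit Defensive.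
Import GRing.Theory.
Local Open Scope ring_scope.

Record nalg (F : fieldType) := NAlg {
  nalg_car :> lmodType F;
  nmul : nalg_car -> nalg_car -> nalg_car;
  nmulDl : forall a b c, nmul (a + b) c = nmul a c + nmul b c;
  nmulDr : forall a b c, nmul a (b + c) = nmul a b + nmul a c;
  nmulZl : forall (k : F) a b, nmul (k *: a) b = k *: nmul a b;
  nmulZr : forall (k : F) a b, nmul a (k *: b) = k *: nmul a b
}.
Arguments nmul {F A} : rename.

Section Defs.
Variable F : fieldType.

Definition assoc (A : nalg F) (a b c : A) : A :=
  nmul (nmul a b) c - nmul a (nmul b c).

Definition alternative (A : nalg F) : Prop :=
  forall x y : A, assoc x x y = 0 /\ assoc y x x = 0.

Definition is_hom (A B : nalg F) (h : A -> B) : Prop :=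
  [/\ forall a b, h (a + b) = h a + h b,
      forall (k : F) a, h (k *: a) = k *: h a
    & forall a b, h (nmul a b) = nmul (h a) (h b)].

(* (A, g) is the free alternative algebra on the three free generators
   g 0, g 1, g 2 (= x, y, z): A is alternative and has the universal property
   among alternative algebras. *)
Definition is_free_alternative3 (A : nalg F) (g : 'I_3 -> A) : Prop :=
  alternative A /\
  forall (B : nalg F), alternative B -> forall b : 'I_3 -> B,
    exists h : A -> B,
      [/\ is_hom h, (forall i, h (g i) = b i)
        & forall h' : A -> B, is_hom h' -> (forall i, h' (g i) = b i) ->
            forall a, h' a = h a].

(* Nonassociative polynomials (terms) in the variables t_0, t_1, ... ,
   used to express polynomial identities. *)
Inductive nterm : Type :=
| NVar of nat
| NZero
| NAdd of nterm & nterm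
| NScale of F & nterm
| NMul of nterm & nterm.

Fixpoint neval (A : nalg F) (v : nat -> A) (t : nterm) : A :=
  match t with
  | NVar n => v n
  | NZero => 0
  | NAdd t1 t2 => neval v t1 + neval v t2
  | NScale k t1 => k *: neval v t1
  | NMul t1 t2 => nmul (neval v t1) (neval v t2)
  end.

Definition holds (A : nalg F) (t : nterm) : Prop :=
  forall v : nat -> A, neval v t = 0.

Definition holds_on (A : nalg F) (S : A -> Prop) (t : nterm) : Prop :=
  forall v : nat -> A, (forall n, S (v n)) -> neval v t = 0.

(* The variety generated by A is the variety defined by all identities of A;
   B belongs to it iff every identity of A is an identity of B. *)
Definition in_var_gen_by (A B : nalg F) : Prop :=
  forall t, holds A t -> holds B t.

Definition subalgebra (A : nalg F) (S : A -> Prop) : Prop :=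
  [/\ S 0, (forall a b, S a -> S b -> S (a + b)),
      (forall (k : F) a, S a -> S (k *: a))
    & (forall a b, S a -> S b -> S (nmul a b))].

Definition is_hom_on (A B : nalg F) (S : A -> Prop) (h : A -> B) : Prop :=
  [/\ forall a b, S a -> S b -> h (a + b) = h a + h b,
      forall (k : F) a, S a -> h (k *: a) = k *: h a
    & forall a b, S a -> S b -> h (nmul a b) = nmul (h a) (h b)].

Definition free_in_var_gen_by (G A : nalg F) (S : A -> Prop) : Prop :=
  subalgebra S /\ (forall t, holds G t -> holds_on S t) /\
  exists (X : Type) (e : X -> A), (forall x, S (e x)) /\
    forall B : nalg F, in_var_gen_by G B -> forall f : X -> B,
      exists h : A -> B,
        [/\ is_hom_on S h, (forall x, h (e x) = f x)
          & forall h' : A -> B, is_hom_on S h' -> (forall x, h' (e x) = f x) ->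
              forall a, S a -> h' a = h a].

Inductive monomial (A : nalg F) (g : 'I_3 -> A) : nat -> A -> Prop :=
| mon_gen i : monomial g 1 (g i)
| mon_mul m n a b : monomial g m a -> monomial g n b ->
                    monomial g (m + n) (nmul a b).

Inductive veronese2 (A : nalg F) (g : 'I_3 -> A) : A -> Prop :=
| ver_mon n a : monomial g n a -> ~~ odd n -> veronese2 g a
| ver_zero : veronese2 g 0
| ver_add a b : veronese2 g a -> veronese2 g b -> veronese2 g (a + b)
| ver_scale (k : F) a : veronese2 g a -> veronese2 g (k *: a).

End Defs.

From mathcomp Require Import all_boot all_order all_algebra.
From mathcomp Require Import ring.
Set Implicit Arguments. Unset Strict Implicit. Unset Printing Implicit Defensive.
Import GRing.Theory.
Local Open Scope ring_scope.

(* In an alternative algebra the associator is alternating, and the Teichmuller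
   identity yields the even-degree relation (x^2, xy, y^2) = 0.  Suppose the
   Veronese subalgebra V were free in Alt_3 on generators e_u.  The truncated
   polynomial algebra in x, y and the algebra C = F^3 + F^3 + F with product
   (u,v,w)(u',v',w') = (0, u x u', v . u'), whose associator is a determinant,
   are images of Alt[x,y,z], hence lie in Alt_3.
   Projecting Alt[x,y,z] onto the truncated algebra sends V into the degree-2
   part F^3, a square-zero ideal.  Extend e_u |-> (degree-2 part of e_u) to a
   homomorphism phi : V -> C; uniqueness of extensions into the truncated
   algebra forces phi to agree with the degree-2 projection on all of V.  Then
   phi(x^2), phi(xy), phi(y^2) are the standard basis of F^3 and their
   associator is det = 1, contradicting (x^2, xy, y^2) = 0. *)

Section NonassociativeAlgebra.
Variables (F : fieldType) (A : nalg F).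
Implicit Types a b c d : A.

Lemma nmul0r b : nmul (0 : A) b = 0.
Proof. by have := nmulZl 0 0 b; rewrite !scale0r. Qed.

Lemma nmulr0 a : nmul a (0 : A) = 0.
Proof. by have := nmulZr 0 a 0; rewrite !scale0r. Qed.

Lemma nmulNr a b : nmul (- a) b = - nmul a b.
Proof. by rewrite -scaleN1r nmulZl scaleN1r. Qed.

Lemma nmulrN a b : nmul a (- b) = - nmul a b.
Proof. by rewrite -scaleN1r nmulZr scaleN1r. Qed.

Lemma nmulBl a b c : nmul (a - b) c = nmul a c - nmul b c.
Proof. by rewrite nmulDl nmulNr. Qed.

Lemma nmulBr a b c : nmul a (b - c) = nmul a b - nmul a c.
Proof. by rewrite nmulDr nmulrN. Qed.

Lemma assocDl a b c d : assoc (a + b) c d = assoc a c d + assoc b c d.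
Proof. by rewrite /assoc !nmulDl opprD addrACA. Qed.

Lemma assocDm a b c d : assoc a (b + c) d = assoc a b d + assoc a c d.
Proof. by rewrite /assoc !nmulDr !nmulDl !nmulDr opprD addrACA. Qed.

Lemma assocDr a b c d : assoc a b (c + d) = assoc a b c + assoc a b d.
Proof. by rewrite /assoc !nmulDr opprD addrACA. Qed.

Lemma teichmuller a b c d :
  assoc (nmul a b) c d + assoc a b (nmul c d) =
  assoc a (nmul b c) d + nmul a (assoc b c d) + nmul (assoc a b c) d.
Proof. by rewrite /assoc nmulBl nmulBr !subrKA [RHS]addrC subrKA. Qed.

End NonassociativeAlgebra.

Section AlternativeAlgebra.
Variables (F : fieldType) (A : nalg F).
Hypothesis altA : alternative A.
Implicit Types a b c : A.

Lemma assoc_aab a b : assoc a a b = 0. Proof. by case: (altA a b). Qed.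

Lemma assoc_baa a b : assoc b a a = 0. Proof. by case: (altA a b). Qed.

Lemma assoc_swapl a b c : assoc a b c = - assoc b a c.
Proof.
apply/eqP; rewrite -addr_eq0; apply/eqP.
by have := assoc_aab (a + b) c; rewrite assocDl !assocDm !assoc_aab add0r addr0.
Qed.

Lemma assoc_swapr a b c : assoc a b c = - assoc a c b.
Proof.
apply/eqP; rewrite -addr_eq0; apply/eqP.
by have := assoc_baa (b + c) a; rewrite assocDr !assocDm !assoc_baa add0r addr0 addrC.
Qed.

Lemma assoc_rot a b c : assoc a b c = assoc b c a.
Proof. by rewrite assoc_swapl assoc_swapr opprK. Qed.

Lemma assoc_aba a b : assoc a b a = 0.
Proof. by rewrite assoc_swapr assoc_aab oppr0. Qed.

Lemma assoc_abac a b c : assoc a b (nmul a c) = nmul (assoc a b c) a.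
Proof.
set P := assoc a b (nmul a c); set Q := assoc a b (nmul c a).
set R := assoc a (nmul a b) c; set S := assoc a (nmul b a) c.
set K := assoc (nmul a a) b c; set M := nmul (assoc a b c) a.
have QRK : Q + R = K.
  have := teichmuller c a a b.
  rewrite assoc_aab assoc_baa nmulr0 nmul0r !addr0.
  by rewrite (assoc_rot (nmul c a)) (assoc_rot c a) (assoc_rot c (nmul a a)).
have KQM : K = Q + M.
  have := teichmuller b c a a.
  rewrite !assoc_baa nmulr0 add0r addr0.
  by rewrite -(assoc_rot (nmul a a)) -(assoc_rot a b c) -(assoc_rot a b (nmul c a)).
have RM : R = M by apply: (@addrI _ Q); rewrite QRK.
have SQ : S = Q.
  have := teichmuller c a b a.
  rewrite assoc_aba nmulr0 addr0 (assoc_swapr (nmul c a)) (assoc_rot c a (nmul b a)).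
  rewrite (assoc_swapr c (nmul a b)) (assoc_rot c a b) (assoc_rot c a (nmul a b)).
  rewrite (assoc_rot (nmul c a)) -/R RM addNr.
  by move=> /(congr1 (+%R Q)); rewrite addNKr addr0.
have SPK : S + P = K.
  have := teichmuller b a a c.
  rewrite assoc_aab assoc_baa nmulr0 nmul0r !addr0.
  rewrite (assoc_swapl (nmul b a)) (assoc_swapl b a) (assoc_swapl b).
  by rewrite -opprD => /oppr_inj.
by apply: (@addrI _ S); rewrite SPK KQM SQ.
Qed.

Lemma assoc_aa_ab_bb a b : assoc (nmul a a) (nmul a b) (nmul b b) = 0.
Proof.
have assoc_a_bb_b : assoc a (nmul b b) b = 0.
  by rewrite assoc_rot assoc_rot assoc_abac assoc_aba nmul0r.
have assoc_a_bb_ab : assoc a (nmul b b) (nmul a b) = 0.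
  by rewrite assoc_abac assoc_a_bb_b nmul0r.
have := teichmuller a a (nmul a b) (nmul b b).
rewrite !assoc_aab nmul0r addr0 (assoc_swapr a (nmul a b)) assoc_a_bb_ab oppr0 nmulr0.
rewrite !addr0 => ->.
by rewrite assoc_swapr assoc_abac assoc_a_bb_ab nmul0r oppr0.
Qed.

End AlternativeAlgebra.

Lemma eq_neval (F : fieldType) (A : nalg F) (v w : nat -> A) t :
  v =1 w -> neval v t = neval w t.
Proof. by move=> vw; elim: t => //= [t1 -> t2 ->|k t ->|t1 -> t2 ->]. Qed.

Section Homomorphisms.
Variables (F : fieldType) (A B : nalg F) (h : A -> B).
Hypothesis homh : is_hom h.

Lemma hom0 : h 0 = 0.
Proof. by have [_ hZ _] := homh; rewrite -(scale0r (0 : A)) hZ scale0r. Qed.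

Lemma hom_neval v t : h (neval v t) = neval (h \o v) t.
Proof.
have [hD hZ hM] := homh.
elim: t => //= [|t1 IH1 t2 IH2|k t IH|t1 IH1 t2 IH2]; first exact: hom0.
- by rewrite hD IH1 IH2.
- by rewrite hZ IH.
- by rewrite hM IH1 IH2.
Qed.

Lemma in_var_gen_by_image (s : B -> A) : cancel s h -> in_var_gen_by A B.
Proof.
move=> hs t At v.
by rewrite (eq_neval t (fun n => esym (hs (v n)))) -hom_neval At hom0.
Qed.

Lemma is_hom_onW (S : A -> Prop) : is_hom_on S h.
Proof. by have [hD hZ hM] := homh; split=> *; rewrite ?hD ?hZ ?hM. Qed.

End Homomorphisms.

Section HomomorphismsOn.
Variables (F : fieldType) (A B : nalg F) (S : A -> Prop) (h : A -> B).
Hypotheses (subS : subalgebra S) (homh : is_hom_on S h).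

Lemma hom_on0 : h 0 = 0.
Proof.
have [S0 _ _ _] := subS; have [hD _ _] := homh.
by apply: (@addrI _ (h 0)); rewrite -hD // !addr0.
Qed.

Lemma hom_onN a : S a -> h (- a) = - h a.
Proof. by have [_ hZ _] := homh; move=> Sa; rewrite -scaleN1r hZ // scaleN1r. Qed.

Lemma hom_on_assoc a b c : S a -> S b -> S c ->
  h (assoc a b c) = assoc (h a) (h b) (h c).
Proof.
have [_ _ SZ SM] := subS; have [hD _ hM] := homh.
move=> Sa Sb Sc; have Sab := SM _ _ Sa Sb; have Sbc := SM _ _ Sb Sc.
have Sa_bc := SM _ _ Sa Sbc; have Sab_c := SM _ _ Sab Sc.
have SNa_bc : S (- nmul a (nmul b c)) by rewrite -scaleN1r; apply: SZ.
by rewrite /assoc hD // hom_onN // !hM.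
Qed.

End HomomorphismsOn.

Definition extends_uniquely (F : fieldType) (A : nalg F) (S : A -> Prop)
    (X : Type) (e : X -> A) (B : nalg F) : Prop :=
  forall f : X -> B, exists h : A -> B,
    [/\ is_hom_on S h, (forall x, h (e x) = f x)
      & forall h' : A -> B, is_hom_on S h' -> (forall x, h' (e x) = f x) ->
          forall a, S a -> h' a = h a].

Lemma extends_uniquely_eq (F : fieldType) (A B : nalg F) (S : A -> Prop)
    (X : Type) (e : X -> A) (h1 h2 : A -> B) :
  extends_uniquely S e B -> is_hom_on S h1 -> is_hom_on S h2 ->
  (forall x, h1 (e x) = h2 (e x)) -> forall a, S a -> h1 a = h2 a.
Proof.
move=> freeS hom1 hom2 e12 a Sa; have [h [_ _ uniq_h]] := freeS (h2 \o e).
by rewrite (uniq_h h1) // (uniq_h h2).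
Qed.

Lemma regular_scaleE (F : fieldType) (k a : F^o) : k *: a = k * a. Proof. by []. Qed.

Section CrossProduct.
Variable F : fieldType.

Definition vec2 : lmodType F := (F^o * F^o)%type.
Definition vec3 : lmodType F := (F^o * F^o * F^o)%type.

Definition cross (u v : vec3) : vec3 :=
  (u.1.2 * v.2 - u.2 * v.1.2, u.2 * v.1.1 - u.1.1 * v.2, u.1.1 * v.1.2 - u.1.2 * v.1.1).
Definition dot (u v : vec3) : F := u.1.1 * v.1.1 + u.1.2 * v.1.2 + u.2 * v.2.

End CrossProduct.

Ltac pair_ring := repeat (apply: injective_projections => /=);
  unfold cross, dot; rewrite /= ?regular_scaleE; ring.

Section ConcreteAlgebras.
Variable F : fieldType.

(* Polynomials in x, y without constant term modulo degree >= 3, in the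
   coordinates ((x, y), (x^2, xy, y^2)). *)
Definition trunc_car : lmodType F := (vec2 F * vec3 F)%type.
Definition trunc_mul (a b : trunc_car) : trunc_car :=
  (0, (a.1.1 * b.1.1, a.1.1 * b.1.2 + a.1.2 * b.1.1, a.1.2 * b.1.2)).

Ltac trunc_case a := case: a => [[? ?] [[? ?] ?]].

Lemma trunc_mulDl a b c : trunc_mul (a + b) c = trunc_mul a c + trunc_mul b c.
Proof. trunc_case a; trunc_case b; trunc_case c; pair_ring. Qed.
Lemma trunc_mulDr a b c : trunc_mul a (b + c) = trunc_mul a b + trunc_mul a c.
Proof. trunc_case a; trunc_case b; trunc_case c; pair_ring. Qed.
Lemma trunc_mulZl k a b : trunc_mul (k *: a) b = k *: trunc_mul a b.
Proof. trunc_case a; trunc_case b; pair_ring. Qed.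
Lemma trunc_mulZr k a b : trunc_mul a (k *: b) = k *: trunc_mul a b.
Proof. trunc_case a; trunc_case b; pair_ring. Qed.

Definition trunc_alg : nalg F := NAlg trunc_mulDl trunc_mulDr trunc_mulZl trunc_mulZr.

Lemma trunc_alternative : alternative trunc_alg.
Proof. by move=> a b; trunc_case a; trunc_case b; split; pair_ring. Qed.

Definition cross_car : lmodType F := (vec3 F * vec3 F * F^o)%type.
Definition cross_mul (a b : cross_car) : cross_car :=
  (0, cross a.1.1 b.1.1, dot a.1.2 b.1.1).

Ltac cross_case a := case: a => [[[[? ?] ?] [[? ?] ?]] ?].

Lemma cross_mulDl a b c : cross_mul (a + b) c = cross_mul a c + cross_mul b c.
Proof. cross_case a; cross_case b; cross_case c; pair_ring. Qed.
Lemma cross_mulDr a b c : cross_mul a (b + c) = cross_mul a b + cross_mul a c.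
Proof. cross_case a; cross_case b; cross_case c; pair_ring. Qed.
Lemma cross_mulZl k a b : cross_mul (k *: a) b = k *: cross_mul a b.
Proof. cross_case a; cross_case b; pair_ring. Qed.
Lemma cross_mulZr k a b : cross_mul a (k *: b) = k *: cross_mul a b.
Proof. cross_case a; cross_case b; pair_ring. Qed.

Definition cross_alg : nalg F := NAlg cross_mulDl cross_mulDr cross_mulZl cross_mulZr.

Lemma cross_alg_assoc (a b c : cross_alg) :
  assoc a b c = (0, 0, dot (cross a.1.1 b.1.1) c.1.1).
Proof. rewrite /assoc; cross_case a; cross_case b; cross_case c; pair_ring. Qed.

Lemma cross_alternative : alternative cross_alg.
Proof.
by move=> a b; rewrite !cross_alg_assoc; cross_case a; cross_case b; split; pair_ring.
Qed.

Definition trunc_gen (i : 'I_3) : trunc_alg :=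
  ((((val i == 0)%N)%:R, ((val i == 1)%N)%:R), 0).

Definition cross_gen (i : 'I_3) : cross_alg :=
  ((((val i == 0)%N)%:R, ((val i == 1)%N)%:R, ((val i == 2)%N)%:R), 0, 0).

End ConcreteAlgebras.

Section Veronese.
Variables (F : fieldType) (A : nalg F) (g : 'I_3 -> A).
Hypothesis altA : alternative A.

Let x := g (@Ordinal 3 0 isT).
Let y := g (@Ordinal 3 1 isT).
Let z := g (@Ordinal 3 2 isT).

Definition trunc_lift (b : trunc_alg F) : A :=
  b.1.1 *: x + b.1.2 *: y +
  b.2.1.1 *: nmul x x + b.2.1.2 *: nmul x y + b.2.2 *: nmul y y.

Definition cross_lift (c : cross_alg F) : A :=
  c.1.1.1.1 *: x + c.1.1.1.2 *: y + c.1.1.2 *: z +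
  c.1.2.1.1 *: nmul y z + c.1.2.1.2 *: nmul z x + c.1.2.2 *: nmul x y +
  c.2 *: nmul (nmul x y) z.

Variables (pi : A -> trunc_alg F) (chi : A -> cross_alg F).
Hypotheses (pi_hom : is_hom pi) (pi_g : forall i, pi (g i) = trunc_gen F i).
Hypotheses (chi_hom : is_hom chi) (chi_g : forall i, chi (g i) = cross_gen F i).

Lemma trunc_liftK : cancel trunc_lift pi.
Proof.
have [hD hZ hM] := pi_hom; move=> b.
rewrite /trunc_lift !hD !hZ !hM !pi_g.
by case: b => [[? ?] [[? ?] ?]]; pair_ring.
Qed.

Lemma cross_liftK : cancel cross_lift chi.
Proof.
have [hD hZ hM] := chi_hom; move=> c.
rewrite /cross_lift !hD !hZ !hM !chi_g.
by case: c => [[[[? ?] ?] [[? ?] ?]] ?]; pair_ring.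
Qed.

Lemma veronese2_trunc_deg1 a : veronese2 g a -> (pi a).1 = 0.
Proof.
have [hD hZ hM] := pi_hom.
elim=> [n b [i|m1 m2 b1 b2 _ _] //| |b1 b2 _ IH1 _ IH2|k b _ IH] /=.
- by rewrite hM.
- by rewrite (hom0 pi_hom).
- by rewrite hD /= IH1 IH2 addr0.
- by rewrite hZ /= IH scaler0.
Qed.

Lemma veronese2_mul_gen i j : veronese2 g (nmul (g i) (g j)).
Proof. by apply: (@ver_mon _ _ _ (1 + 1)) => //; apply: mon_mul; apply: mon_gen. Qed.

Section FreeVeronese.
Variables (X : Type) (e : X -> A).
Hypotheses (subV : subalgebra (veronese2 g)) (eV : forall u, veronese2 g (e u)).
Hypothesis freeV : forall B, in_var_gen_by A B -> extends_uniquely (veronese2 g) e B.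

Lemma free_veronese2_deg2 : exists phi : A -> cross_alg F,
  is_hom_on (veronese2 g) phi /\
  forall a, veronese2 g a -> (phi a).1.1 = (pi a).2.
Proof.
have varB := in_var_gen_by_image pi_hom trunc_liftK.
have varC := in_var_gen_by_image chi_hom cross_liftK.
have [phi [phi_hom phi_e _]] := freeV varC (fun u => ((pi (e u)).2, 0, 0)).
exists phi; split=> // a Va.
(* Both psi and pi map V into the square-zero ideal 0 + vec3 of trunc_alg. *)
pose psi a : trunc_alg F := (0, (phi a).1.1).
have psi_hom : is_hom_on (veronese2 g) psi.
  by have [hD hZ hM] := phi_hom; split=> *; rewrite /psi ?hD ?hZ ?hM //; pair_ring.
apply: (congr1 snd (_ : psi a = pi a)).
apply: (extends_uniquely_eq (freeV varB) psi_hom (is_hom_onW pi_hom _)) => // u.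
by rewrite /psi phi_e [RHS]surjective_pairing veronese2_trunc_deg1.
Qed.

Lemma free_veronese2_false : False.
Proof.
have [phi [phi_hom phi_pi]] := free_veronese2_deg2.
have [_ _ piM] := pi_hom.
have := hom_on_assoc subV phi_hom (a := nmul x x) (b := nmul x y) (c := nmul y y).
rewrite assoc_aa_ab_bb // (hom_on0 subV phi_hom) cross_alg_assoc.
move=> /(_ (veronese2_mul_gen _ _) (veronese2_mul_gen _ _) (veronese2_mul_gen _ _)).
move=> /(congr1 snd) /=; rewrite !phi_pi; try exact: veronese2_mul_gen.
rewrite !piM !pi_g => det0.
by move/eqP: (oner_neq0 F); apply; rewrite [RHS]det0 /cross /dot /=; ring.
Qed.

End FreeVeronese.

Lemma veronese2_not_free : ~ free_in_var_gen_by A (veronese2 g).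
Proof.
by move=> [subV [_ [X [e [eV freeV]]]]]; apply: (free_veronese2_false subV eV freeV).
Qed.

End Veronese.

Theorem proposition2 (F : fieldType) (A : nalg F) (g : 'I_3 -> A) :
  is_free_alternative3 g -> ~ free_in_var_gen_by A (veronese2 g).
Proof.
move=> [altA freeA].
have [pi [pi_hom pi_g _]] := freeA _ (@trunc_alternative F) (trunc_gen F).
have [chi [chi_hom chi_g _]] := freeA _ (@cross_alternative F) (cross_gen F).
exact: (veronese2_not_free altA pi_hom pi_g chi_hom chi_g).
Qed.
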